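(* Let $n\ge 3$ and let $F$ be a minimal set of faulty edges of $Q_n$. Let $T$ be a set disconnected halfway with respect to $F$ such that no proper subset of $T$ is disconnected halfway with respect to $F$. Then: (1) if $|T|=4$, then $T$ is the vertex set of a 2-dimensional subcube (a 4-cycle of $Q_n$); (2) if $|T|=6$, then the subgraph of $Q_n$ induced by $T$ contains a cycle of length 6; (3) if $|T|=8$, then either the subgraph induced by $T$ contains a cycle of length 8, or $Q_n-F$ contains a CL trap.
   Context: $Q_n$ is the $n$-dimensional hypercube on the binary strings of length $n$, two strings adjacent iff they differ in exactly one bit; a $k$-dimensional subcube is the set of vertices obtained by fixing $n-k$ coordinates. The parity of a vertex is the number of ones in its label modulo 2; $|T|_0,|T|_1$ denote the numbers of parity-0 and parity-1 vertices of $T$. $F$ is a set of ''faulty'' edges and $Q_n-F$ is the graph on all vertices of $Q_n$ with the edges of $Q_n$ not in $F$ (the ''healthy'' edges). $F$ is minimal if $Q_n-F$ has no Hamiltonian cycle but $Q_n-F'$ has one for every proper subset $F'\subsetneq F$. A nonempty proper subset $T$ of the vertices is disconnected halfway (with respect to $F$) if either (1) $|T|_0\ge |T|_1$ and every edge joining a vertex of parity 0 in $T$ to a vertex outside $T$ is in $F$, or (2) $|T|_1\ge |T|_0$ and every edge joining a vertex of parity 1 in $T$ to a vertex outside $T$ is in $F$. A CL trap in $Q_n-F$ is a vertex $u$ together with three neighbours $v,w,x$ such that the edges $(u,v),(u,w),(u,x)$ are healthy and each of $v,w,x$ has degree exactly 2 in $Q_n-F$. *)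

From HB Require Import structures.
From mathcomp Require Import all_boot.
Set Implicit Arguments. Unset Strict Implicit. Unset Printing Implicit Defensive.

Definition vtx (n : nat) := {ffun 'I_n -> bool}.

Definition adj n (u v : vtx n) : bool := #|[set i | u i != v i]| == 1.

Definition is_edge n (e : {set vtx n}) : Prop :=
  exists u v : vtx n, adj u v /\ e = [set u; v].

Definition edge_set n (F : {set {set vtx n}}) : Prop :=
  forall e, e \in F -> is_edge e.

Definition healthy n (F : {set {set vtx n}}) (u v : vtx n) : bool :=
  adj u v && ([set u; v] \notin F).

Definition parity n (u : vtx n) : bool := odd #|[set i | u i]|.

Definition hamiltonian n (F : {set {set vtx n}}) : Prop :=
  exists s : seq (vtx n),
    [/\ uniq s, (forall v, v \in s) & cycle (healthy F) s].

Definition minimal_faulty n (F : {set {set vtx n}}) : Prop :=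
  ~ hamiltonian F /\ (forall F' : {set {set vtx n}}, F' \proper F -> hamiltonian F').

Definition disc_halfway n (F : {set {set vtx n}}) (T : {set vtx n}) : Prop :=
  [/\ T != set0, T != setT &
    ((#|[set x in T | ~~ parity x]| >= #|[set x in T | parity x]| /\
      forall u v, u \in T -> ~~ parity u -> v \notin T -> adj u v ->
                  [set u; v] \in F)
     \/
     (#|[set x in T | parity x]| >= #|[set x in T | ~~ parity x]| /\
      forall u v, u \in T -> parity u -> v \notin T -> adj u v ->
                  [set u; v] \in F))].

Definition is_subcube n (k : nat) (T : {set vtx n}) : Prop :=
  exists (S : {set 'I_n}) (x : vtx n),
    #|S| = k /\ T = [set y : vtx n | [forall i, (i \notin S) ==> (y i == x i)]].

Definition induced_cycle_len n (T : {set vtx n}) (l : nat) : Prop :=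
  exists s : seq (vtx n),
    [/\ size s = l, uniq s, {subset s <= T} & cycle (@adj n) s].

Definition degF n (F : {set {set vtx n}}) (v : vtx n) : nat :=
  #|[set y | healthy F v y]|.

Definition CL_trap n (F : {set {set vtx n}}) : Prop :=
  exists u v w x : vtx n,
    [/\ [&& v != w, v != x & w != x],
        [&& healthy F u v, healthy F u w & healthy F u x] &
        [/\ degF F v = 2, degF F w = 2 & degF F x = 2]].

From HB Require Import structures.
From mathcomp Require Import all_boot zify.
Set Implicit Arguments. Unset Strict Implicit. Unset Printing Implicit Defensive.

(* Split T by parity, and let b be a parity such that every edge leaving T
   from a vertex of parity b is faulty.  For A contained in the b-part, let
   N(A) be the healthy neighbours of A inside T.  If |N(A)| <= |A|, then
   A :|: N(A) is again disconnected halfway, so by minimality it is all of T.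
   When |T| = 2m this forces both parts to have m vertices and the bipartite
   graph of healthy edges between them to satisfy the strict Hall condition
   |N(A)| > |A| for 0 < |A| < m.  An exhaustive check over m x m bipartite
   graphs shows that for m = 2 such a graph is complete, for m = 3 it has a
   Hamiltonian cycle, and for m = 4 it has a Hamiltonian cycle or a vertex with
   three neighbours of degree 2; the latter is a CL trap since the degrees of
   b-vertices in this graph are their degrees in Q_n - F. *)

Fixpoint seqs_over (T : Type) (s : seq T) (k : nat) : seq (seq T) :=
  if k is k'.+1 then [seq x :: t | x <- s, t <- seqs_over s k'] else [:: [::]].

Lemma mem_seqs_over (T : eqType) (s : seq T) k t :
  (t \in seqs_over s k) = (size t == k) && all (mem s) t.
Proof.
elim: k t => [|k IHk] [|x t] //=.
  by apply/allpairsP => -[[y u] []].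
apply/allpairsP/and3P => [[[y u] /= [ys]]|[/eqP [tk] xs ts]].
  by rewrite IHk => /andP [/eqP uk us] [-> ->]; rewrite uk.
by exists (x, t); rewrite /= IHk tk eqxx.
Qed.

(* Unlike [has], which evaluates its predicate on every item under [vm_compute]
   because [||] is an ordinary function, [has_lazy] stops at the first witness. *)
Fixpoint has_lazy (T : Type) (a : pred T) (s : seq T) : bool :=
  if s is x :: s' then (if a x then true else has_lazy a s') else false.

Lemma has_lazyE (T : Type) (a : pred T) (s : seq T) : has_lazy a s = has a s.
Proof. by elim: s => //= x s ->; case: (a x). Qed.

(* Depth-first search for a sequence accepted by [P] among the extensions of the
   reversed simple [e]-path [p] by [k] vertices of [V]; only soundness is proved. *)
Fixpoint path_search (T : eqType) (P : pred (seq T)) (e : rel T) (V : seq T) k p :=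
  if k is k'.+1 then
    has_lazy (fun y => if (y \notin p) && e (head y p) y
                       then path_search P e V k' (y :: p) else false) V
  else P p.

Lemma path_searchP (T : eqType) (P : pred (seq T)) e V k p :
  path_search P e V k p -> exists s, P s.
Proof.
elim: k p => [|k IHk] p /=; first by exists p.
by rewrite has_lazyE => /hasP [y _]; case: ifP => // _ /IHk.
Qed.

(* A square bit matrix [M] is a bipartite graph whose vertex [(false, i)] is
   row [i] and whose vertex [(true, j)] is column [j]. *)
Section BipartiteMatrix.

Variable M : seq (seq bool).

Definition bientry i j := nth false (nth [::] M i) j.

Definition bineighbours (I : seq nat) : seq nat :=
  [seq j <- iota 0 (size M) | has (bientry^~ j) I].

Definition strict_hall : bool :=
  all (fun I => (0 < size I < size M) ==> (size I < size (bineighbours I)))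
      [seq mask s (iota 0 (size M)) | s <- seqs_over [:: false; true] (size M)].

Definition complete_bipartite : bool :=
  all (fun i => all (bientry i) (iota 0 (size M))) (iota 0 (size M)).

Definition biadj (u v : bool * nat) : bool :=
  (u.1 != v.1) && (if u.1 then bientry v.2 u.2 else bientry u.2 v.2).

Definition bivertices : seq (bool * nat) :=
  [seq (c, i) | c <- [:: false; true], i <- iota 0 (size M)].

Definition ham_cycle_witness (s : seq (bool * nat)) : bool :=
  [&& cycle biadj s, size s == (size M).*2, uniq s & all (fun v => v.2 < size M) s].

Definition has_ham_cycle : bool :=
  path_search ham_cycle_witness biadj bivertices (size M).*2.-1 [:: (false, 0)].

Definition has_claw_trap : bool :=
  has (fun j => 2 < count (fun i => bientry i j && (size (bineighbours [:: i]) == 2))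
                          (iota 0 (size M)))
      (iota 0 (size M)).

Lemma uniq_bineighbours I : uniq (bineighbours I).
Proof. exact/filter_uniq/iota_uniq. Qed.

Lemma bineighbours_lt I : all (gtn (size M)) (bineighbours I).
Proof. by apply/allP => j; rewrite mem_filter mem_iota => /andP []. Qed.

End BipartiteMatrix.

Definition square_bitmatrices m := seqs_over (seqs_over [:: false; true] m) m.

(* The guards are written with [if] rather than [==>] so that [vm_compute]
   skips the search on matrices violating Hall's condition. *)
Lemma strict_hall_complete2 :
  all (fun M => if strict_hall M then complete_bipartite M else true)
      (square_bitmatrices 2).
Proof. by vm_compute. Qed.

Lemma strict_hall_ham_cycle3 :
  all (fun M => if strict_hall M then has_ham_cycle M else true)
      (square_bitmatrices 3).
Proof. by vm_compute. Qed.

Lemma strict_hall_ham_cycle_or_trap4 :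
  all (fun M => if strict_hall M then has_ham_cycle M || has_claw_trap M else true)
      (square_bitmatrices 4).
Proof. by vm_compute. Qed.

Section Hypercube.

Variable n : nat.
Implicit Types (u v : vtx n) (i j : 'I_n).

Definition flip u i : vtx n := [ffun k => u k (+) (k == i)].

Lemma flipK i : involutive (flip^~ i).
Proof. by move=> u; apply/ffunP => k; rewrite !ffunE -addbA addbb addbF. Qed.

Lemma adj_flip u v : adj u v -> exists i, v = flip u i.
Proof.
case/cards1P => i /setP Hi; exists i; apply/ffunP => k; move: (Hi k).
by rewrite !inE ffunE; case: (u k); case: (v k) => <-.
Qed.

Lemma parity_flip u i : parity (flip u i) = ~~ parity u.
Proof.
have flipE k : flip u i k = if k == i then ~~ u i else u k.
  by rewrite ffunE; case: eqVneq => [->|_]; rewrite ?addbT ?addbF.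
rewrite /parity; case ui: (u i).
  have -> : [set k | flip u i k] = [set k | u k] :\ i.
    by apply/setP => k; rewrite !inE flipE; case: eqVneq => [->|]; rewrite ?ui.
  by rewrite [in RHS](cardsD1 i) inE ui /= negbK.
have -> : [set k | flip u i k] = i |: [set k | u k].
  by apply/setP => k; rewrite !inE flipE; case: eqVneq => [->|]; rewrite ?ui.
by rewrite cardsU1 inE ui.
Qed.

Lemma adj_parity u v : adj u v -> parity v = ~~ parity u.
Proof. by case/adj_flip => i ->; rewrite parity_flip. Qed.

Lemma adj_sym u v : adj u v = adj v u.
Proof. by congr (_ == _); apply: eq_card => k; rewrite !inE eq_sym. Qed.

Lemma healthy_sym (F : {set {set vtx n}}) u v : healthy F u v = healthy F v u.
Proof. by rewrite /healthy adj_sym setUC. Qed.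

Lemma subcube2_flips (a : vtx n) i j : i != j ->
  is_subcube 2 [set a; flip a i; flip a j; flip (flip a i) j].
Proof.
move=> ij; exists [set i; j], a; split; first by rewrite cards2 ij.
apply/setP => y; rewrite !inE -!orbA; apply/idP/forallP => [|agree].
  case/or4P => /eqP -> k; apply/implyP; rewrite !inE negb_or => /andP [ki kj];
    by rewrite ?ffunE ?(negbTE ki) ?(negbTE kj) ?addbF.
have [c [d ->]] : exists c d,
    y = [ffun k => a k (+) ((k == i) && c) (+) ((k == j) && d)].
  exists (y i != a i), (y j != a j); apply/ffunP => k; rewrite ffunE.
  case: (eqVneq k i) => [->|ki]; first by rewrite (negbTE ij) addbF; case: (y i); case: (a i).
  case: (eqVneq k j) => [->|kj]; first by rewrite addbF; case: (y j); case: (a j).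
  by rewrite !addbF; apply/eqP/(implyP (agree k)); rewrite !inE negb_or ki kj.
by case: c; case: d; apply/or4P;
  [constructor 4 | constructor 2 | constructor 3 | constructor 1];
  apply/eqP/ffunP => k; rewrite !ffunE ?andbT ?andbF ?addbF.
Qed.

Lemma four_cycle_subcube (a b c d : vtx n) : a != b -> c != d ->
  adj a c -> adj c b -> adj a d -> adj d b -> is_subcube 2 [set a; c; d; b].
Proof.
move=> ab cd /adj_flip [i Ec] /adj_flip [j Eb'] /adj_flip [k Ed] /adj_flip [l Eb].
subst c d; rewrite {}Eb' in ab Eb *.
have ij : i != j by apply: contraNneq ab => <-; rewrite flipK.
have at_k := congr1 (fun x : vtx n => x k) Eb; rewrite !ffunE eqxx in at_k.
have kl : k != l by apply: contraNneq ab => lk; rewrite Eb -lk flipK.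
have ki : k != i by apply: contraNneq cd => ->.
have -> : k = j.
  by apply/eqP; move: at_k; rewrite (negbTE ki) (negbTE kl); case: (a k); case: (k == j).
exact: subcube2_flips.
Qed.

End Hypercube.

Section HalfwayDisconnection.

Variables (n : nat) (F : {set {set vtx n}}).
Implicit Types (T A : {set vtx n}) (b : bool).

Definition part T b := [set x in T | parity x == b].

Definition closed_side T b := forall u v,
  u \in T -> parity u = b -> v \notin T -> adj u v -> [set u; v] \in F.

Definition inner_nbhd T A := [set y in T | [exists a in A, healthy F a y]].

Lemma card_part T b : #|part T b| + #|part T (~~ b)| = #|T|.
Proof.
rewrite -(cardsID [set x | parity x == b] T); congr (_ + _); apply: eq_card => x;
  by rewrite !inE; case: (parity x); case: b; rewrite ?andbT ?andbF.
Qed.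

Lemma disc_halfwayP T : disc_halfway F T <->
  exists b, [/\ T != set0, T != setT, #|part T (~~ b)| <= #|part T b| & closed_side T b].
Proof.
have partT : part T true = [set x in T | parity x].
  by apply/setP => x; rewrite !inE eqb_id.
have partF : part T false = [set x in T | ~~ parity x].
  by apply/setP => x; rewrite !inE eqbF_neg.
split=> [[T0 TT [[le cl]|[le cl]]]|[[] [T0 TT le cl]]].
- exists false; split; rewrite //= ?partT ?partF // => u v uT pu.
  by apply: cl; rewrite ?pu.
- by exists true; split; rewrite //= ?partT ?partF.
- by split; rewrite // -partT -partF; right.
- split; rewrite // -partT -partF; left; split=> // u v uT /negbTE.
  exact: cl.
Qed.

Lemma inner_nbhd_part T A b :
  A \subset part T b -> inner_nbhd T A \subset part T (~~ b).
Proof.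
move=> /subsetP AT; apply/subsetP => y; rewrite !inE => /andP [-> /existsP [a /andP]].
case=> /AT; rewrite inE => /andP [_ /eqP <-] /andP [/adj_parity ->].
by rewrite eqxx.
Qed.

Lemma closed_side_expand T A b : closed_side T b -> A \subset part T b ->
  closed_side (A :|: inner_nbhd T A) b.
Proof.
move=> cl AT u v; rewrite !inE negb_or => /orP [uA|/andP [_ /existsP [a /andP [aA au]]]] pu.
  have uT : u \in T by move/subsetP: AT => /(_ u uA); rewrite inE => /andP [].
  case/andP=> _; case vT: (v \in T) => /=; last by move=> _; apply: cl; rewrite ?vT.
  move=> vN uv; apply: contraR vN => uvF.
  by apply/existsP; exists u; rewrite uA /healthy uv uvF.
move/subsetP: AT => /(_ a aA); rewrite inE => /andP [_ /eqP pa].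
by move: (adj_parity (andP au).1); rewrite pu pa; case: b {pu pa cl}.
Qed.

End HalfwayDisconnection.

Section MinimalHalfway.

Variables (n : nat) (F : {set {set vtx n}}) (T : {set vtx n}).
Hypothesis minT : forall T' : {set vtx n}, T' \proper T -> ~ disc_halfway F T'.

Lemma minimal_expansion (A : {set vtx n}) b : T != setT -> closed_side F T b ->
  A \subset part T b -> A != set0 -> #|inner_nbhd F T A| <= #|A| ->
  A :|: inner_nbhd F T A = T.
Proof.
move=> TT cl AT A0 le; set U := A :|: _.
have AU : A \subset U := subsetUl _ _.
have UT : U \subset T.
  rewrite subUset; apply/andP; split; apply/subsetP => y; last by rewrite inE => /andP [].
  by move/(subsetP AT); rewrite inE => /andP [].
apply/eqP; rewrite eqEproper UT /=; apply/negP => /minT; apply.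
apply/disc_halfwayP; exists b; split.
- by apply: contraNneq A0 => U0; rewrite -subset0 -U0.
- by apply: contraNneq TT => UT'; rewrite eqEsubset subsetT -UT'.
- apply: leq_trans (subset_leq_card (_ : A \subset part U b)); last first.
    apply/subsetP => x xA; rewrite inE (subsetP AU) //=.
    by move/subsetP: AT => /(_ x xA); rewrite inE => /andP [].
  apply: leq_trans le; apply: subset_leq_card; apply/subsetP => x.
  rewrite /U !inE => /andP [/orP [xA|//] /eqP px].
  by move/subsetP: AT => /(_ x xA); rewrite inE px; case: (b); rewrite andbF.
- exact: closed_side_expand.
Qed.

Lemma minimal_strict_hall m (A : {set vtx n}) b :
  #|T| = m + m -> T != setT -> closed_side F T b -> A \subset part T b ->
  0 < #|A| < m -> #|A| < #|inner_nbhd F T A|.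
Proof.
move=> Tm TT cl AT /andP [A0 Am]; rewrite ltnNge; apply/negP => le.
have := minimal_expansion TT cl AT _ le; rewrite -card_gt0 A0 => /(_ isT) UE.
by have := (leq_card_setU A (inner_nbhd F T A)).1; rewrite UE Tm; lia.
Qed.

Lemma minimal_balanced m b : #|T| = m + m -> 1 < m -> T != setT ->
  closed_side F T b -> #|part T (~~ b)| <= #|part T b| ->
  #|part T b| = m /\ #|part T (~~ b)| = m.
Proof.
move=> Tm m1 TT cl le; have cardT := card_part T b.
suff : #|part T b| <= m by lia.
rewrite leqNgt; apply/negP => gt.
have /card_geqP [s [us ss sT]] : m.-1 <= #|part T b| by lia.
have AT : [set x in s] \subset part T b by apply/subsetP => x; rewrite inE => /sT.
have As : #|[set x in s]| = m.-1 by rewrite cardsE (card_uniqP us).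
have := minimal_strict_hall Tm TT cl AT; rewrite As.
have := subset_leq_card (inner_nbhd_part F AT); lia.
Qed.

Lemma minimal_halfway_balanced m : disc_halfway F T -> #|T| = m + m -> 1 < m ->
  exists b, [/\ closed_side F T b, #|part T b| = m & #|part T (~~ b)| = m].
Proof.
case/disc_halfwayP => b [_ TT le cl] Tm m1; exists b.
by have [] := minimal_balanced Tm m1 TT cl le.
Qed.

End MinimalHalfway.

Section SideMatrix.

Variables (n : nat) (F : {set {set vtx n}}) (T : {set vtx n}) (b : bool) (m : nat).
Hypotheses (cl : closed_side F T b)
           (card_b : #|part T b| = m) (card_nb : #|part T (~~ b)| = m).

(* [(false, i)] is the [i]-th vertex of [T] of parity [b], and [(true, j)] the
   [j]-th vertex of parity [~~ b]. *)
Definition side_vertex (u : bool * nat) : vtx n :=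
  nth [ffun=> false] (enum (part T (u.1 (+) b))) u.2.

Definition side_matrix : seq (seq bool) :=
  [seq [seq healthy F (side_vertex (false, i)) (side_vertex (true, j)) | j <- iota 0 m]
     | i <- iota 0 m].

Definition side_set c (I : seq nat) : {set vtx n} :=
  [set x in [seq side_vertex (c, i) | i <- I]].

Lemma card_part_side c : #|part T (c (+) b)| = m.
Proof. by case: c. Qed.

Lemma side_vertex_part u : u.2 < m -> side_vertex u \in part T (u.1 (+) b).
Proof. by move=> um; rewrite -mem_enum mem_nth // -cardE card_part_side. Qed.

Lemma side_vertex_in u : u.2 < m -> side_vertex u \in T.
Proof. by move/side_vertex_part; rewrite inE => /andP []. Qed.

Lemma parity_side_vertex u : u.2 < m -> parity (side_vertex u) = u.1 (+) b.
Proof. by move/side_vertex_part; rewrite inE => /andP [_ /eqP]. Qed.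

Lemma side_vertex_inj : {in [pred u | u.2 < m] &, injective side_vertex}.
Proof.
move=> [c i] [d j] im jm E; have := parity_side_vertex im.
rewrite E parity_side_vertex // => /addIb /= cd; subst d; congr (_, _).
by apply/eqP; move/eqP: E; rewrite /side_vertex nth_uniq ?enum_uniq // -cardE card_part_side.
Qed.

Lemma side_vertex_onto c y : y \in part T (c (+) b) ->
  exists2 j, j < m & y = side_vertex (c, j).
Proof.
rewrite -mem_enum => yT; exists (index y (enum (part T (c (+) b)))).
  by rewrite -(card_part_side c) cardE index_mem.
by rewrite /side_vertex nth_index.
Qed.

Lemma size_side_matrix : size side_matrix = m.
Proof. by rewrite size_map size_iota. Qed.

Lemma side_matrix_square : side_matrix \in square_bitmatrices m.
Proof.
rewrite mem_seqs_over size_side_matrix eqxx; apply/allP => _ /mapP [i _ ->].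
by rewrite inE mem_seqs_over size_map size_iota eqxx; apply/allP => x; rewrite !inE; case: x.
Qed.

Lemma bientry_side i j : i < m -> j < m ->
  bientry side_matrix i j = healthy F (side_vertex (false, i)) (side_vertex (true, j)).
Proof.
move=> im jm; rewrite /bientry (nth_map 0) ?size_iota // nth_iota //.
by rewrite (nth_map 0) ?size_iota // nth_iota.
Qed.

Lemma biadj_side u v : u.2 < m -> v.2 < m ->
  biadj side_matrix u v = healthy F (side_vertex u) (side_vertex v).
Proof.
case: u v => [c i] [d j] /= im jm; rewrite /biadj /=.
case: (eqVneq c d) => [<-|].
  apply/esym/negbTE; apply/negP => /andP [/adj_parity]; rewrite !parity_side_vertex //=.
  by case: (c (+) b).
by case: c d => [] [] //= _; rewrite bientry_side // healthy_sym.
Qed.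

Lemma card_side_set c I : uniq I -> all (gtn m) I -> #|side_set c I| = size I.
Proof.
move=> uI /allP Im; have uS : uniq [seq side_vertex (c, i) | i <- I].
  rewrite map_inj_in_uniq // => i j iI jI E.
  by case: (@side_vertex_inj (c, i) (c, j) (Im _ iI) (Im _ jI) E).
by rewrite cardsE (card_uniqP uS) size_map.
Qed.

Lemma inner_nbhd_side I : all (gtn m) I ->
  inner_nbhd F T (side_set false I) = side_set true (bineighbours side_matrix I).
Proof.
move=> /allP Im; apply/setP => y; rewrite !inE; apply/andP/mapP.
  case=> yT /existsP [a /andP [+ h]]; rewrite inE => /mapP [i iI Ea]; subst a.
  have im : i < m := Im i iI.
  have [|j jm Ey] := side_vertex_onto (c := true) (y := y).
    by rewrite inE yT (adj_parity (andP h).1) (@parity_side_vertex (false, i) im) /= eqxx.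
  subst y; exists j => //; rewrite mem_filter mem_iota size_side_matrix jm leq0n !andbT.
  by apply/hasP; exists i; rewrite ?bientry_side.
case=> j; rewrite mem_filter mem_iota size_side_matrix => /and3P [/hasP [i iI h] _ jm] ->.
split; first exact: side_vertex_in.
apply/existsP; exists (side_vertex (false, i)).
have im : i < m := Im i iI.
apply/andP; split; last by rewrite -bientry_side.
by rewrite inE; apply/mapP; exists i.
Qed.

Lemma side_strict_hall :
  (forall T' : {set vtx n}, T' \proper T -> ~ disc_halfway F T') ->
  #|T| = m + m -> T != setT -> strict_hall side_matrix.
Proof.
move=> minT Tm TT; apply/allP => _ /mapP [s _ ->]; rewrite size_side_matrix.
set I := mask s _; apply/implyP => I_m.
have sI : subseq I (iota 0 m) := mask_subseq _ _.
have uI : uniq I := subseq_uniq sI (iota_uniq 0 m).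
have Im : all (gtn m) I by apply/allP => i /(mem_subseq sI); rewrite mem_iota.
have AT : side_set false I \subset part T b.
  apply/subsetP => x; rewrite inE => /mapP [i /(allP Im) im ->].
  exact: (@side_vertex_part (false, i)).
have := minimal_strict_hall minT Tm TT cl AT; rewrite inner_nbhd_side //.
rewrite !card_side_set ?uniq_bineighbours //; first by apply.
by have := bineighbours_lt side_matrix I; rewrite size_side_matrix.
Qed.

Lemma side_ham_cycle : has_ham_cycle side_matrix -> induced_cycle_len T m.*2.
Proof.
case/path_searchP => s /and4P [cyc /eqP sz us sm].
rewrite size_side_matrix in sz sm; have /allP inm := sm.
exists [seq side_vertex u | u <- s]; split.
- by rewrite size_map.
- by rewrite map_inj_in_uniq // => u v /inm um /inm vm; apply: side_vertex_inj.
- by move=> _ /mapP [u /inm um ->]; apply: side_vertex_in.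
rewrite cycle_map; apply: (sub_in_cycle (P := [pred v | v.2 < m])) cyc => // u v um vm.
by rewrite biadj_side // => /andP [].
Qed.

Lemma degF_side i : i < m ->
  degF F (side_vertex (false, i)) = size (bineighbours side_matrix [:: i]).
Proof.
move=> im; rewrite -(card_side_set true) ?uniq_bineighbours //; last first.
  by have := bineighbours_lt side_matrix [:: i]; rewrite size_side_matrix.
rewrite -inner_nbhd_side /= ?im //; apply: eq_card => y; rewrite !inE.
apply/idP/andP => [h|[_ /existsP [a /andP [+ h]]]]; last first.
  by rewrite inE mem_seq1 => /eqP <-.
split; last by apply/existsP; exists (side_vertex (false, i)); rewrite inE mem_seq1 eqxx.
apply: contraTT h => yT; apply/negP => /andP [uv /negP]; apply.
by apply: cl => //; [apply: side_vertex_in | rewrite parity_side_vertex].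
Qed.

Lemma side_vertex_eq u v : u.2 < m -> v.2 < m ->
  (side_vertex u == side_vertex v) = (u == v).
Proof. by move=> um vm; apply: (inj_in_eq side_vertex_inj). Qed.

Lemma side_claw_trap : has_claw_trap side_matrix -> CL_trap F.
Proof.
rewrite /has_claw_trap size_side_matrix => /hasP [j]; rewrite mem_iota /= => jm.
rewrite -size_filter; set S := filter _ _.
have : uniq S by apply/filter_uniq/iota_uniq.
have inS i : i \in S ->
    [/\ i < m, bientry side_matrix i j & size (bineighbours side_matrix [:: i]) == 2].
  by rewrite mem_filter mem_iota /= => /andP [/andP [e d] im]; split.
case: S inS => [|i1 [|i2 [|i3 S]]] //= inS /andP [+ /andP [+ _]] _.
rewrite !inE !negb_or => /and3P [i12 i13 _] /andP [i23 _].
have [i1m e1 /eqP d1] := inS i1 (mem_head _ _).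
have := inS i2; rewrite !inE eqxx orbT => /(_ isT) [i2m e2 /eqP d2].
have := inS i3; rewrite !inE eqxx !orbT => /(_ isT) [i3m e3 /eqP d3].
exists (side_vertex (true, j)), (side_vertex (false, i1)), (side_vertex (false, i2)),
  (side_vertex (false, i3)); split.
- by rewrite !side_vertex_eq // !xpair_eqE /= i12 i13 i23.
- by rewrite ![healthy F (side_vertex (true, j)) _]healthy_sym -!bientry_side // e1 e2 e3.
- by rewrite !degF_side.
Qed.

Lemma side_complete : m = 2 -> complete_bipartite side_matrix -> is_subcube 2 T.
Proof.
rewrite /complete_bipartite size_side_matrix => m2 /allP full.
have adj_side i j : i < m -> j < m -> adj (side_vertex (false, i)) (side_vertex (true, j)).
  move=> im jm; have := full i; rewrite mem_iota im => /(_ isT) /allP /(_ j).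
  by rewrite mem_iota jm bientry_side // => /(_ isT) /andP [].
have -> : T = [set side_vertex (false, 0); side_vertex (true, 0);
                   side_vertex (true, 1); side_vertex (false, 1)].
  apply/setP => y; apply/idP/idP => [yT|]; last first.
    by rewrite !inE -!orbA => /or4P [] /eqP ->; apply: side_vertex_in; rewrite m2.
  have : y \in part T ((parity y (+) b) (+) b) by rewrite inE yT addbK eqxx.
  case/side_vertex_onto => k; rewrite m2 !inE => k2 ->.
  by case: (parity y (+) b); case: k k2 => [|[|]] //; rewrite eqxx ?orbT.
apply: four_cycle_subcube; rewrite ?side_vertex_eq ?m2 //;
  by first [apply: adj_side | rewrite adj_sym; apply: adj_side]; rewrite m2.
Qed.

End SideMatrix.

Theorem lemma5 (n : nat) (F : {set {set vtx n}}) (T : {set vtx n}) :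
  3 <= n -> edge_set F -> minimal_faulty F ->
  disc_halfway F T ->
  (forall T' : {set vtx n}, T' \proper T -> ~ disc_halfway F T') ->
  [/\ #|T| = 4 -> is_subcube 2 T,
      #|T| = 6 -> induced_cycle_len T 6 &
      #|T| = 8 -> induced_cycle_len T 8 \/ CL_trap F].
Proof.
move=> _ _ _ dT minT; have TT : T != setT by case: dT.
have side m : #|T| = m + m -> 1 < m -> exists b, [/\ closed_side F T b,
    #|part T b| = m, #|part T (~~ b)| = m & strict_hall (side_matrix F T b m)].
  move=> Tm m1; have [b [cl cb cnb]] := minimal_halfway_balanced minT dT Tm m1.
  by exists b; split=> //; apply: side_strict_hall.
split=> [T4|T6|T8].
- have [b [cl cb cnb hall]] := side 2 T4 isT.
  have /allP/(_ _ (side_matrix_square F T b 2)) := strict_hall_complete2.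
  by rewrite hall; apply: side_complete.
- have [b [cl cb cnb hall]] := side 3 T6 isT.
  have /allP/(_ _ (side_matrix_square F T b 3)) := strict_hall_ham_cycle3.
  by rewrite hall; apply: side_ham_cycle.
have [b [cl cb cnb hall]] := side 4 T8 isT.
have /allP/(_ _ (side_matrix_square F T b 4)) := strict_hall_ham_cycle_or_trap4.
rewrite hall => /orP [ham|trap]; first by left; apply: side_ham_cycle ham.
by right; apply: side_claw_trap trap.
Qed.
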